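(* Let $z=z(k,\varepsilon)$ and choose $\eta$ with $\Re(\overline z\eta)\ge0$. Then there is a constant $\rho>0$ independent of $k$ and $\varepsilon$ such that for all $k>0$ and all $v\in H^1(\Omega)$, $$\vert a_\varepsilon(v,v)\vert\ \ge\ \Im\big(\Theta\,a_\varepsilon(v,v)\big)\ \ge\ \rho\,\frac{\vert\varepsilon\vert}{k^2}\Vert v\Vert_{1,k}^2,\qquad\text{where }\Theta=-\overline z/\vert z\vert.$$
   Context: $\Omega\subset\mathbb R^d$ ($d=2,3$) a bounded Lipschitz domain with boundary $\Gamma$. $k>0$, $\varepsilon\in\mathbb R\setminus\{0\}$ with $\vert\varepsilon\vert\le C_0k^2$ for a fixed constant $C_0$, $\eta\in\mathbb C$. $z=\sqrt{k^2+{\rm i}\varepsilon}$ with the branch cut of the square root on the positive real axis (so $\Im z>0$). $a_\varepsilon(u,v)=\int_\Omega\nabla u\cdot\nabla\overline v-(k^2+{\rm i}\varepsilon)\int_\Omega u\overline v-{\rm i}\eta\int_\Gamma u\overline v$; $\Vert v\Vert_{1,k}^2=\Vert\nabla v\Vert_{L^2(\Omega)}^2+k^2\Vert v\Vert_{L^2(\Omega)}^2$. *)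

From HB Require Import structures.
From mathcomp Require Import all_boot all_order all_algebra.
From mathcomp Require Import complex.
Set Implicit Arguments. Unset Strict Implicit. Unset Printing Implicit Defensive.
Import Order.TTheory GRing.Theory Num.Theory.
Local Open Scope ring_scope.
Local Open Scope complex_scope.

(* Abstract model of the quantities entering a_eps(v,v) for v in H^1(Omega):
     G = ||grad v||^2_{L^2(Omega)},  L = ||v||^2_{L^2(Omega)},
     B = ||v||^2_{L^2(Gamma)} (trace).
   For v = u the sesquilinear form a_eps literally unfolds to
     a_eps(v,v) = G - (k^2 + i eps) L - i eta B. *)
Definition a_eps_diag (R : rcfType) (k eps : R) (eta : R[i]) (G L B : R) : R[i] :=
  G%:C - ((k ^+ 2)%:C + 'i * eps%:C) * L%:C - 'i * eta * B%:C.

Definition norm1k2 (R : rcfType) (k G L : R) : R := G + k ^+ 2 * L.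

Definition Theta (R : rcfType) (z : R[i]) : R[i] :=
  - (z^*) / (Normc.normc z)%:C.

From HB Require Import structures.
From mathcomp Require Import all_boot all_order all_algebra.
From mathcomp Require Import complex ring lra.
Set Implicit Arguments. Unset Strict Implicit. Unset Printing Implicit Defensive.
Import Order.TTheory GRing.Theory Num.Theory.
Local Open Scope ring_scope.
Local Open Scope complex_scope.

(* Write z = x + iy and a = a_eps(v,v).  Since |Theta| = 1, Im (Theta a) <= |a|.
   Using x^2 - y^2 = k^2 and 2xy = eps, the imaginary part unfolds to
     Im (Theta a) = (y / |z|) (||grad v||^2 + |z|^2 ||v||^2) + Re (conj z eta) ||v||_Gamma^2 / |z|,
   whose last term is nonnegative.  Finally k^2 <= |z|^2 <= k^2 + |eps| <= (1 + C0) k^2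
   and |eps| <= 2 |z| y give y / |z| >= |eps| / (2 (1 + C0) k^2). *)

Section ThetaRotation.
Variable R : rcfType.
Implicit Types (k eps G L B : R) (z w eta : R[i]).

Local Notation normc := (@Normc.normc R).

Lemma normc_sqr z : normc z ^+ 2 = complex.Re z ^+ 2 + complex.Im z ^+ 2.
Proof. by case: z => x y; rewrite /= sqr_sqrtr // addr_ge0 ?sqr_ge0. Qed.

Lemma normc_ge0 z : 0 <= normc z.
Proof. by case: z => x y; rewrite /= sqrtr_ge0. Qed.

Lemma normc_gt0 z : z != 0 -> 0 < normc z.
Proof.
move=> z0; rewrite lt_def normc_ge0 andbT.
by apply: contra z0 => /eqP/Normc.eq0_normc ->.
Qed.

Lemma Im_gt0_neq0 z : 0 < complex.Im z -> z != 0.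
Proof. by apply: contraTneq => ->; rewrite ltxx. Qed.

Lemma normc_real (r : R) : normc r%:C = `|r|.
Proof. by rewrite /= expr0n addr0 sqrtr_sqr. Qed.

Lemma normc_conj z : normc z^* = normc z.
Proof. by case: z => x y; rewrite /= sqrrN. Qed.

Lemma normr_Re_le_normc z : `|complex.Re z| <= normc z.
Proof.
rewrite -[leRHS]ger0_norm ?normc_ge0 // -ler_sqr ?nnegrE ?normr_ge0 //.
by rewrite !real_normK ?num_real // normc_sqr lerDl sqr_ge0.
Qed.

Lemma normr_Im_le_normc z : `|complex.Im z| <= normc z.
Proof.
rewrite -[leRHS]ger0_norm ?normc_ge0 // -ler_sqr ?nnegrE ?normr_ge0 //.
by rewrite !real_normK ?num_real // normc_sqr lerDr sqr_ge0.
Qed.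

Lemma normc_Theta z : z != 0 -> normc (Theta z) = 1.
Proof.
move=> z0; rewrite /Theta Normc.normcM normcN normc_conj Normc.normcV.
by rewrite normc_real ger0_norm ?normc_ge0 // divff // gt_eqF ?normc_gt0.
Qed.

Lemma Im_Theta_le_normc z w : z != 0 -> complex.Im (Theta z * w) <= normc w.
Proof.
move=> z0; apply: le_trans (ler_norm _) _.
by rewrite (le_trans (normr_Im_le_normc _)) // Normc.normcM normc_Theta ?mul1r.
Qed.

Lemma Im_Theta_mul z w : z != 0 ->
  complex.Im (Theta z * w)
  = (complex.Im z * complex.Re w - complex.Re z * complex.Im w) / normc z.
Proof.
move=> /normc_gt0; rewrite /Theta; set n := normc z => n0.
case: z w @n n0 => x y [p q] n n0 /=.
rewrite expr0n /= addr0; field.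
by rewrite gt_eqF.
Qed.

Lemma Re_sqrc z : complex.Re (z ^+ 2) = complex.Re z ^+ 2 - complex.Im z ^+ 2.
Proof. by case: z => x y; rewrite expr2 /= -!expr2. Qed.

Lemma Im_sqrc z : complex.Im (z ^+ 2) = 2 * complex.Re z * complex.Im z.
Proof. by case: z => x y; rewrite expr2 /=; ring. Qed.

Lemma Re_a_eps_diag k eps eta G L B :
  complex.Re (a_eps_diag k eps eta G L B) = G - k ^+ 2 * L + complex.Im eta * B.
Proof. by case: eta => e1 e2; rewrite /a_eps_diag /=; ring. Qed.

Lemma Im_a_eps_diag k eps eta G L B :
  complex.Im (a_eps_diag k eps eta G L B) = - (eps * L) - complex.Re eta * B.
Proof. by case: eta => e1 e2; rewrite /a_eps_diag /=; ring. Qed.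

Lemma Im_Theta_a_eps_diag k eps eta z G L B :
  z != 0 -> z ^+ 2 = (k ^+ 2)%:C + 'i * eps%:C ->
  complex.Im (Theta z * a_eps_diag k eps eta G L B)
  = complex.Im z / normc z * norm1k2 (normc z) G L
    + complex.Re (z^* * eta) * B / normc z.
Proof.
move=> z0 hz; have n0 := normc_gt0 z0.
have hk : k ^+ 2 = complex.Re z ^+ 2 - complex.Im z ^+ 2.
  by rewrite -Re_sqrc hz /=; ring.
have heps : eps = 2 * complex.Re z * complex.Im z.
  by rewrite -Im_sqrc hz /=; ring.
rewrite Im_Theta_mul // Re_a_eps_diag Im_a_eps_diag /norm1k2 normc_sqr hk heps.
case: z eta {z0 hz hk heps} n0 => x y [e1 e2] /= n0.
by field; rewrite gt_eqF.
Qed.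

Lemma normc_sqrc z : normc (z ^+ 2) = normc z ^+ 2.
Proof. by rewrite !expr2 Normc.normcM. Qed.

Section SquareRoot.
Variables (k eps : R) (z : R[i]).
Hypothesis hz : z ^+ 2 = (k ^+ 2)%:C + 'i * eps%:C.

Lemma sqr_le_sqr_normc : k ^+ 2 <= normc z ^+ 2.
Proof.
have -> : k ^+ 2 = complex.Re (z ^+ 2) by rewrite hz /=; ring.
by rewrite -normc_sqrc (le_trans (ler_norm _)) ?normr_Re_le_normc.
Qed.

Lemma sqr_normc_le : normc z ^+ 2 <= k ^+ 2 + `|eps|.
Proof.
rewrite -normc_sqrc hz (le_trans (le_normcD _ _)) //.
rewrite Normc.normcM !normc_real ger0_norm ?sqr_ge0 //.
by rewrite /= expr0n expr1n add0r sqrtr1 mul1r.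
Qed.

Lemma normr_le_normc_Im : `|eps| <= 2 * normc z * `|complex.Im z|.
Proof.
have -> : eps = complex.Im (z ^+ 2) by rewrite hz /=; ring.
rewrite Im_sqrc !normrM ger0_norm //.
by rewrite ler_wpM2r ?ler_wpM2l ?normr_Re_le_normc.
Qed.

Lemma Im_div_normc_ge (C : R) : 0 < k -> 0 < complex.Im z -> `|eps| <= C * k ^+ 2 ->
  (2 * (1 + C))^-1 * (`|eps| / k ^+ 2) <= complex.Im z / normc z.
Proof.
move=> k0 y0 hC.
have k20 : 0 < k ^+ 2 by rewrite exprn_gt0.
have n0 : 0 < normc z.
  by apply/normc_gt0/Im_gt0_neq0.
have C0 : 0 <= C by rewrite -(pmulr_lge0 _ k20) (le_trans (normr_ge0 eps)).
have hn : normc z ^+ 2 <= (1 + C) * k ^+ 2 by have := sqr_normc_le; lra.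
have he : `|eps| <= 2 * normc z * complex.Im z.
  by rewrite -[complex.Im z]gtr0_norm ?normr_le_normc_Im.
apply: (@le_trans _ _ (`|eps| / (2 * normc z ^+ 2))).
  have -> : (2 * (1 + C))^-1 * (`|eps| / k ^+ 2) = `|eps| / (2 * ((1 + C) * k ^+ 2)).
    by field; rewrite gt_eqF //; lra.
  rewrite ler_wpM2l // lef_pV2 ?posrE ?mulr_gt0 ?exprn_gt0 //; lra.
have -> : complex.Im z / normc z = 2 * normc z * complex.Im z / (2 * normc z ^+ 2).
  by field; rewrite gt_eqF.
by rewrite ler_wpM2r // invr_ge0 mulr_ge0 ?exprn_ge0 ?ltW.
Qed.

End SquareRoot.

End ThetaRotation.

Theorem lemma2p4 (R : rcfType) (C0 : R) (hC0 : 0 < C0)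
  (H1 : Type) (gradn2 l2n2 trn2 : H1 -> R)
  (hgrad : forall v, 0 <= gradn2 v) (hl2 : forall v, 0 <= l2n2 v)
  (htr : forall v, 0 <= trn2 v) :
  exists rho : R, 0 < rho /\
    forall (k eps : R) (eta z : R[i]),
      0 < k -> eps != 0 -> `|eps| <= C0 * k ^+ 2 ->
      z ^+ 2 = (k ^+ 2)%:C + 'i * eps%:C -> (0 < complex.Im z)%R ->
      (0 <= complex.Re (z^* * eta))%R ->
      forall v : H1,
        let a := a_eps_diag k eps eta (gradn2 v) (l2n2 v) (trn2 v) in
        (complex.Im (Theta z * a) <= Normc.normc a)%R /\
        (rho * (`|eps| / k ^+ 2) * norm1k2 k (gradn2 v) (l2n2 v)
          <= complex.Im (Theta z * a))%R.
Proof.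
exists (2 * (1 + C0))^-1; split; first by rewrite invr_gt0 mulr_gt0 ?addr_gt0.
move=> k eps eta z k0 _ hepsC hz y0 hRe v a.
have z0 := Im_gt0_neq0 y0.
split; first exact: Im_Theta_le_normc.
have n0 := normc_gt0 z0.
have hw := Im_div_normc_ge hz k0 y0 hepsC.
have hnorm : norm1k2 k (gradn2 v) (l2n2 v) <= norm1k2 (Normc.normc z) (gradn2 v) (l2n2 v).
  by rewrite lerD2l ler_wpM2r ?(sqr_le_sqr_normc hz).
have hB : 0 <= complex.Re (z^* * eta) * trn2 v / Normc.normc z.
  by apply: divr_ge0; [exact: mulr_ge0 | exact: ltW].
rewrite {}/a Im_Theta_a_eps_diag // -[leLHS]addr0 lerD //.
apply: le_trans (ler_wpM2r _ hw) (ler_wpM2l _ hnorm).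
- exact: addr_ge0 (hgrad v) (mulr_ge0 (sqr_ge0 k) (hl2 v)).
- by rewrite divr_ge0 ?ltW.
Qed.
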